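(* Let $G$ be a finite $p$-group. Then for every $k\geq 1$, $[\lambda_k(G),G^\varphi]=[G,(\lambda_k(G))^\varphi]$ in $\nu(G)$.
   Context: Conventions: ${}^gh=ghg^{-1}$ and $[g,h]=ghg^{-1}h^{-1}$. For a group $G$ let $G^\varphi$ be an isomorphic copy of $G$ via $\varphi:G\to G^\varphi$. The group $\nu(G)$ is the quotient of the free product $G\ast G^\varphi$ by the normal subgroup generated by all words ${}^{g_3}[g_1,g_2^\varphi]\cdot[{}^{g_3}g_1,({}^{g_3}g_2)^\varphi]^{-1}$ and ${}^{g_3^\varphi}[g_1,g_2^\varphi]\cdot[{}^{g_3}g_1,({}^{g_3}g_2)^\varphi]^{-1}$, $g_1,g_2,g_3\in G$. For subgroups $A,B\le G$, $[A,B^\varphi]$ is the subgroup of $\nu(G)$ generated by all $[a,b^\varphi]$, $a\in A$, $b\in B$. The lower central $p$-series is $\lambda_1(G)=G$, $\lambda_{k+1}(G)=[\lambda_k(G),G]\lambda_k(G)^p$. *)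

From mathcomp Require Import all_boot all_fingroup all_solvable.
Set Implicit Arguments. Unset Strict Implicit. Unset Printing Implicit Defensive.
Local Open Scope group_scope.

Section Nu.
Variable gT : finGroupType.

(* Lower central p-series, indexed as in the paper: lambda_1 = G,
   lambda_{k+1} = [lambda_k, G] lambda_k^p  (here G = [set: gT]).
   lambda_ p 0 is a junk value (= G). *)
Definition lambda_step (p : nat) (L : {set gT}) : {set gT} :=
  <<[~: L, [set: gT]] :|: [set x ^+ p | x in L]>>.
Definition lambda_ (p k : nat) : {set gT} := iter k.-1 (lambda_step p) [set: gT].

(* nu(G) as a presented group: words over the letters of G * G^phi.
   A letter (c, g, i) is the generator g of copy c (false = G, true = G^phi),
   inverted iff i. *)
Definition letter := (bool * gT * bool)%type.
Definition word := seq letter.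
Definition linv (l : letter) : letter := (l.1.1, l.1.2, ~~ l.2).
Definition winv (w : word) : word := rev (map linv w).
Definition emb (c : bool) (g : gT) : word := [:: (c, g, false)].
Definition wconj (y x : word) : word := y ++ x ++ winv y.
Definition wcomm (x y : word) : word := x ++ y ++ winv x ++ winv y.
(* paper's conjugation in G: ^h g = h g h^-1 *)
Definition gconj (h g : gT) : gT := h * g * h^-1.

Definition nu_relator (r : word) : Prop :=
  exists (c : bool) (g1 g2 g3 : gT),
    r = wconj (emb c g3) (wcomm (emb false g1) (emb true g2))
        ++ winv (wcomm (emb false (gconj g3 g1)) (emb true (gconj g3 g2))).

(* equality in nu(G): the congruence generated by free reduction, the
   multiplication tables of G and G^phi (free product) and the nu relators *)
Inductive nueq : word -> word -> Prop :=
| nueq_refl w : nueq w w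
| nueq_sym u v : nueq u v -> nueq v u
| nueq_trans u v w : nueq u v -> nueq v w -> nueq u w
| nueq_ctx a b u v : nueq u v -> nueq (a ++ u ++ b) (a ++ v ++ b)
| nueq_free l : nueq [:: l; linv l] [::]
| nueq_mul c g h : nueq [:: (c, g, false); (c, h, false)] [:: (c, g * h, false)]
| nueq_rel r : nu_relator r -> nueq r [::].

Inductive gen_words (S : word -> Prop) : word -> Prop :=
| gen_nil : gen_words S [::]
| gen_cons s v : S s -> gen_words S v -> gen_words S (s ++ v)
| gen_invcons s v : S s -> gen_words S v -> gen_words S (winv s ++ v).

Definition in_nusub (S : word -> Prop) (w : word) : Prop :=
  exists2 v, gen_words S v & nueq w v.

Definition comm_gens (A B : {set gT}) (w : word) : Prop :=
  exists a b, [/\ a \in A, b \in B & w = wcomm (emb false a) (emb true b)].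

End Nu.

(* Induction on k.  Write [A, B^phi] for the subgroup of nu(G) generated by
   the [a, b^phi], and let N = lambda_k, M = lambda_(k+1) = [N, G] N^p with
   [N, G^phi] <= [G, N^phi].  The identity [k, [a, b]^phi] = ^k[a, b^phi] [a, b^phi]^-1
   shows that [G, N^phi] is central modulo the normal subgroup [G, M^phi];
   hence there [a, (b^n)^phi] = [a, b^phi]^n, p-th powers of [G, N^phi] vanish,
   and for x in N both [[x, g], h^phi] and [x^p, h^phi] = [x, h^phi]^p vanish.
   These generate [M, G^phi].  The reverse inclusion follows by the automorphism
   of nu(G) exchanging G and G^phi. *)

From mathcomp Require Import all_boot all_fingroup all_solvable.
From Stdlib Require Import Setoid Morphisms.
Set Implicit Arguments. Unset Strict Implicit. Unset Printing Implicit Defensive.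
Local Open Scope group_scope.

Section WordCalculus.
Variable gT : finGroupType.
Implicit Types (u v w y z : word gT) (a b g h k x : gT) (S : word gT -> Prop).
Local Notation "u =w v" := (@nueq gT u v) (at level 70).

#[local] Instance nueq_Equivalence : Equivalence (@nueq gT).
Proof. split; [exact: nueq_refl | exact: nueq_sym | exact: nueq_trans]. Qed.

#[local] Hint Resolve nueq_refl : core.

#[local] Instance cat_nueq : Proper (@nueq gT ==> @nueq gT ==> @nueq gT) (@cat _).
Proof.
move=> u u' Hu v v' Hv; transitivity (u' ++ v); first exact: (nueq_ctx [::] v Hu).
by have := nueq_ctx u' [::] Hv; rewrite !cats0.
Qed.

Lemma winv_cat u v : winv (u ++ v) = winv v ++ winv u.
Proof. by rewrite /winv map_cat rev_cat. Qed.

Lemma winvK : involutive (@winv gT).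
Proof.
move=> u; rewrite /winv map_rev revK -map_comp -[RHS]map_id.
by apply: eq_map => -[[c g] i]; rewrite /linv /= negbK.
Qed.

Lemma catwV u : u ++ winv u =w [::].
Proof.
elim: u => [|l u IHu] //.
have -> : (l :: u) ++ winv (l :: u) = [:: l] ++ (u ++ winv u) ++ [:: linv l].
  by rewrite -cat1s winv_cat /= -!catA.
by rewrite IHu; exact: nueq_free.
Qed.

Lemma catVw u : winv u ++ u =w [::].
Proof. by have := catwV (winv u); rewrite winvK. Qed.

Lemma catKw u v : winv u ++ (u ++ v) =w v.
Proof. by rewrite catA catVw. Qed.

Lemma catKVw u v : u ++ (winv u ++ v) =w v.
Proof. by rewrite catA catwV. Qed.

#[local] Instance winv_nueq : Proper (@nueq gT ==> @nueq gT) (@winv gT).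
Proof.
move=> u v Huv; transitivity (winv u ++ v ++ winv v); first by rewrite catwV cats0.
by rewrite -[X in X ++ winv v]Huv catKw.
Qed.

Lemma nueq_catwV u v : u ++ winv v =w [::] -> u =w v.
Proof. by move=> Huv; rewrite -[u]cats0 -(catVw v) catA Huv. Qed.

Lemma emb_mul c g h : emb c g ++ emb c h =w emb c (g * h).
Proof. exact: nueq_mul. Qed.

Lemma emb1 c : emb c (1 : gT) =w [::].
Proof. by rewrite -[emb c 1]cats0 -(catwV (emb c 1)) catA emb_mul mul1g catwV. Qed.

Lemma emb_winv c g : winv (emb c g) =w emb c g^-1.
Proof. by rewrite -[winv _]cats0 -(emb1 c) -(mulgV g) -emb_mul catKw. Qed.

Definition letter_val (l : letter gT) : gT := if l.2 then l.1.2^-1 else l.1.2.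

Lemma letter_emb (l : letter gT) : [:: l] =w emb l.1.1 (letter_val l).
Proof. by case: l => [[c g] [|]] //=; rewrite /letter_val /= -emb_winv. Qed.

#[local] Instance wconj_nueq : Proper (@nueq gT ==> @nueq gT ==> @nueq gT) (@wconj gT).
Proof. by move=> y y' Hy u u' Hu; rewrite /wconj Hy Hu. Qed.

Lemma wconj_cat y u v : wconj y (u ++ v) =w wconj y u ++ wconj y v.
Proof. by rewrite /wconj -!catA catKw. Qed.

Lemma wconj_winv y u : wconj y (winv u) = winv (wconj y u).
Proof. by rewrite /wconj !winv_cat winvK catA. Qed.

Lemma wconjM y z u : wconj (y ++ z) u = wconj y (wconj z u).
Proof. by rewrite /wconj winv_cat -!catA. Qed.

Lemma wconj0 u : wconj [::] u = u.
Proof. by rewrite /wconj cats0. Qed.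

Lemma wconj_nil y : wconj y [::] =w [::].
Proof. exact: catwV. Qed.

Lemma wconjK y u v : wconj y u =w v -> u =w wconj (winv y) v.
Proof. by move=> <-; rewrite -wconjM /wconj winv_cat winvK -!catA catKw catVw cats0. Qed.

Lemma gconjM g h x : gconj g (gconj h x) = gconj (g * h) x.
Proof. by rewrite /gconj invMg !mulgA. Qed.

Lemma gconj1 x : gconj 1 x = x.
Proof. by rewrite /gconj invg1 mulg1 mul1g. Qed.

(* The paper's commutator; mathcomp's [~ a, b] is a^-1 b^-1 a b. *)
Definition gcomm a b : gT := a * b * a^-1 * b^-1.

Local Notation commphi a b := (wcomm (emb false a) (emb true b)).

Lemma wconj_commphi c g a b :
  wconj (emb c g) (commphi a b) =w commphi (gconj g a) (gconj g b).
Proof. by apply: nueq_catwV; apply: nueq_rel; exists c, a, b, g. Qed.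

Lemma wconj_letter_commphi (l : letter gT) a b :
  wconj [:: l] (commphi a b) =w
    commphi (gconj (letter_val l) a) (gconj (letter_val l) b).
Proof. by rewrite letter_emb wconj_commphi. Qed.

Lemma commphi1l b : commphi 1 b =w [::].
Proof. by rewrite /wcomm emb_winv invg1 emb1 !cat0s catwV. Qed.

Lemma commphi1r a : commphi a 1 =w [::].
Proof. by rewrite /wcomm (emb_winv true 1) invg1 emb1 cat0s cats0 catwV. Qed.

Lemma commphiMl a b c : commphi (a * b) c =w wconj (emb false a) (commphi b c) ++ commphi a c.
Proof. by rewrite /wcomm /wconj -emb_mul !winv_cat -!catA !catKw. Qed.

Lemma commphiMr a b c : commphi a (b * c) =w commphi a b ++ wconj (emb true b) (commphi a c).
Proof. by rewrite /wcomm /wconj -emb_mul !winv_cat -!catA !catKw. Qed.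

Lemma commphiVl a c : commphi a^-1 c =w wconj (emb false a^-1) (winv (commphi a c)).
Proof.
have := commphiMl a^-1 a c; rewrite mulVg commphi1l wconj_winv => E.
by rewrite -(catKw (wconj (emb false a^-1) (commphi a c)) (commphi a^-1 c)) -E cats0.
Qed.

Lemma commphiVr a b : commphi a b^-1 =w wconj (emb true b^-1) (winv (commphi a b)).
Proof.
have := commphiMr a b b^-1; rewrite mulgV commphi1r => E.
have : wconj (emb true b) (commphi a b^-1) =w winv (commphi a b).
  by rewrite -(catKw (commphi a b) (wconj _ _)) -E cats0.
by move/wconjK; rewrite emb_winv.
Qed.

Lemma gen_words_cat S u v : gen_words S u -> gen_words S v -> gen_words S (u ++ v).
Proof.
by move=> Su Sv; elim: Su => [|s w Ss _ IH|s w Ss _ IH] //; rewrite -catA; constructor.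
Qed.

Lemma gen_words1 S s : S s -> gen_words S s.
Proof. by move=> Ss; rewrite -[s]cats0; apply: gen_cons => //; exact: gen_nil. Qed.

Lemma gen_words_winv S u : gen_words S u -> gen_words S (winv u).
Proof.
elim=> [|s w Ss _ IH|s w Ss _ IH]; first exact: gen_nil.
  rewrite winv_cat; apply: gen_words_cat => //.
  by rewrite -[winv s]cats0; apply: gen_invcons => //; exact: gen_nil.
by rewrite winv_cat winvK; apply: gen_words_cat => //; apply: gen_words1.
Qed.

#[local] Instance in_nusub_nueq S : Proper (@nueq gT ==> iff) (in_nusub S).
Proof.
by move=> u v Huv; split=> -[w Sw Ew]; exists w => //; [rewrite -Huv | rewrite Huv].
Qed.

Lemma nusub_nil S : in_nusub S [::].
Proof. by exists [::]; first exact: gen_nil. Qed.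

Lemma nusub_gen S s : S s -> in_nusub S s.
Proof. by move=> Ss; exists s; first exact: gen_words1. Qed.

Lemma nusub_cat S u v : in_nusub S u -> in_nusub S v -> in_nusub S (u ++ v).
Proof.
by move=> [u' Su' ->] [v' Sv' ->]; exists (u' ++ v'); first exact: gen_words_cat.
Qed.

Lemma nusub_winv S u : in_nusub S u -> in_nusub S (winv u).
Proof. by move=> [u' Su' ->]; exists (winv u'); first exact: gen_words_winv. Qed.

Lemma nusub_ind S (P : word gT -> Prop) :
  Proper (@nueq gT ==> iff) P -> P [::] ->
  (forall s w, S s -> in_nusub S w -> P w -> P (s ++ w)) ->
  (forall s w, S s -> in_nusub S w -> P w -> P (winv s ++ w)) ->
  forall w, in_nusub S w -> P w.
Proof.
move=> PP P0 PS PV w [v Sv ->].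
by elim: Sv => [|s v' Ss Sv' IH|s v' Ss Sv' IH]; [|apply: PS|apply: PV]; rewrite //; exists v'.
Qed.

Lemma eq_wconj_nusub S y1 y2 :
  (forall s, S s -> wconj y1 s =w wconj y2 s) ->
  forall w, in_nusub S w -> wconj y1 w =w wconj y2 w.
Proof.
move=> Hs w; elim/nusub_ind => [u v Huv|||s w' Ss _ IH]; first by rewrite Huv.
- by rewrite !wconj_nil.
- by move=> s w' Ss _ IH; rewrite !wconj_cat Hs // IH.
- by rewrite !wconj_cat !wconj_winv Hs // IH.
Qed.

Lemma nusub_wconj S :
  (forall l s, S s -> in_nusub S (wconj [:: l] s)) ->
  forall y w, in_nusub S w -> in_nusub S (wconj y w).
Proof.
move=> HS; elim=> [|l y IHy] w Sw; first by rewrite wconj0.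
rewrite -cat1s wconjM; elim/nusub_ind: (IHy w Sw) => [u v Huv|||s w' Ss _ IH].
- by rewrite Huv.
- by rewrite wconj_nil; exact: nusub_nil.
- by move=> s w' Ss _ IH; rewrite wconj_cat; apply: nusub_cat => //; apply: HS.
- by rewrite wconj_cat wconj_winv; apply: nusub_cat => //; apply/nusub_winv/HS.
Qed.

Lemma gconj_norm (A : {set gT}) g a :
  [set: gT] \subset 'N(A) -> a \in A -> gconj g a \in A.
Proof.
move=> nA Aa; have -> : gconj g a = a ^ g^-1 by rewrite /gconj /conjg invgK !mulgA.
by rewrite memJ_norm // (subsetP nA) ?inE.
Qed.

Lemma comm_gens_wconj (A B : {set gT}) :
  [set: gT] \subset 'N(A) -> [set: gT] \subset 'N(B) ->
  forall y w, in_nusub (comm_gens A B) w -> in_nusub (comm_gens A B) (wconj y w).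
Proof.
move=> nA nB; apply: nusub_wconj => l _ [a [b [Aa Bb ->]]].
rewrite wconj_letter_commphi; apply: nusub_gen.
by exists (gconj (letter_val l) a), (gconj (letter_val l) b); rewrite !gconj_norm.
Qed.

Local Notation inGG := (in_nusub (comm_gens [set: gT] [set: gT])).

Lemma inGG_commphi a b : inGG (commphi a b).
Proof. by apply: nusub_gen; exists a, b; rewrite !inE. Qed.

Lemma inGG_wconj y w : inGG w -> inGG (wconj y w).
Proof. by apply: comm_gens_wconj; rewrite normT. Qed.

Lemma wconj_phi_inGG g w : inGG w -> wconj (emb true g) w =w wconj (emb false g) w.
Proof. by apply: eq_wconj_nusub => _ [a [b [_ _ ->]]]; rewrite !wconj_commphi. Qed.

Lemma wconj_commphi_inGG a b w :
  inGG w -> wconj (commphi a b) w =w wconj (emb false (gcomm a b)) w.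
Proof.
apply: eq_wconj_nusub => _ [x [y [_ _ ->]]].
have -> : commphi a b =w emb false a ++ emb true b ++ emb false a^-1 ++ emb true b^-1.
  by rewrite /wcomm !emb_winv.
by rewrite !wconjM !wconj_commphi !gconjM /gcomm ?mulgA.
Qed.

Lemma commphi_gcomml a b k :
  commphi (gcomm a b) k =w commphi a b ++ winv (wconj (emb false k) (commphi a b)).
Proof.
have -> : gcomm a b = a * gconj b a^-1 by rewrite /gcomm /gconj !mulgA.
have conj_b : commphi (gconj b a^-1) k =w wconj (emb false b) (commphi a^-1 (gconj b^-1 k)).
  by rewrite wconj_commphi gconjM mulgV gconj1.
have Wab := inGG_commphi a b; have Wak := inGG_commphi a k.
have expand : commphi a (gconj b^-1 k) =w
    wconj (emb true b^-1) (winv (commphi a b) ++ commphi a k ++ wconj (emb false k) (commphi a b)).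
  have -> : gconj b^-1 k = b^-1 * (k * b) by rewrite /gconj invgK mulgA.
  by rewrite commphiMr commphiVr commphiMr (wconj_phi_inGG k Wab) !wconj_cat.
rewrite commphiMl conj_b commphiVl expand wconj_phi_inGG; last first.
  by apply: nusub_cat; [exact: nusub_winv | apply: nusub_cat => //; exact: inGG_wconj].
rewrite -wconj_winv -!wconjM !emb_mul -/(gcomm a b) -wconj_commphi_inGG; last first.
  apply: nusub_winv; apply: nusub_cat; first exact: nusub_winv.
  by apply: nusub_cat => //; exact: inGG_wconj.
move: (wconj (emb false k) (commphi a b)) (commphi a b) (commphi a k) => W U V.
by rewrite /wconj !winv_cat !winvK -!catA catKVw catVw cats0.
Qed.

Lemma commphi_gcommr k a b :
  commphi k (gcomm a b) =w wconj (emb false k) (commphi a b) ++ winv (commphi a b).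
Proof.
have Egc : gcomm a b = gconj a b * b^-1 by [].
have conj_a : commphi k (gconj a b) =w
    wconj (emb false k) (commphi a b) ++ commphi k b ++ winv (commphi a b).
  have := wconj_commphi false a (gconj a^-1 k) b; rewrite gconjM mulgV gconj1 => <-.
  have -> : gconj a^-1 k = a^-1 * (k * a) by rewrite /gconj invgK mulgA.
  rewrite commphiMl commphiVl -wconj_cat -wconjM emb_mul mulgV emb1 wconj0.
  by rewrite commphiMl -catA.
rewrite Egc commphiMr commphiVr -wconjM emb_mul -Egc wconj_phi_inGG; last first.
  exact/nusub_winv/inGG_commphi.
rewrite -wconj_commphi_inGG; last exact/nusub_winv/inGG_commphi.
rewrite conj_a; move: (wconj (emb false k) (commphi a b)) (commphi a b) (commphi k b) => W U V.
by rewrite /wconj -!catA catKw catKVw.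
Qed.

Definition wswap (u : word gT) : word gT := map (fun l => (~~ l.1.1, l.1.2, l.2)) u.

Lemma wswap_cat u v : wswap (u ++ v) = wswap u ++ wswap v.
Proof. exact: map_cat. Qed.

Lemma wswap_winv u : wswap (winv u) = winv (wswap u).
Proof.
by rewrite /wswap /winv map_rev -!map_comp; congr rev; apply: eq_map => -[[c g] i].
Qed.

Lemma wswapK : involutive wswap.
Proof.
move=> u; rewrite /wswap -map_comp -[RHS]map_id.
by apply: eq_map => -[[c g] i] /=; rewrite negbK.
Qed.

Lemma wswap_wconj y u : wswap (wconj y u) = wconj (wswap y) (wswap u).
Proof. by rewrite /wconj !wswap_cat wswap_winv. Qed.

Lemma wswap_commphi a b : wswap (commphi a b) = winv (commphi b a).
Proof. by []. Qed.

Lemma wswap_nueq u v : u =w v -> wswap u =w wswap v.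
Proof.
elim=> {u v} [w|u v _ IH|u v w _ IH1 _ IH2|a b u v _ IH|l|c g h|r [c [g1 [g2 [g3 ->]]]]].
- by [].
- by rewrite IH.
- by rewrite IH1 IH2.
- by rewrite !wswap_cat IH.
- by case: l => [[c g] i]; apply: nueq_free.
- exact: nueq_mul.
- rewrite wswap_cat wswap_winv wswap_wconj !wswap_commphi winvK.
  by rewrite wconj_winv wconj_commphi catVw.
Qed.

Lemma wswap_comm_gens (A B : {set gT}) w :
  in_nusub (comm_gens A B) w -> in_nusub (comm_gens B A) (wswap w).
Proof.
move=> [v Sv /wswap_nueq ->]; exists (wswap v) => //.
elim: Sv => [|s v' [a [b [Aa Bb ->]]] _ IH|s v' [a [b [Aa Bb ->]]] _ IH].
- exact: gen_nil.
- by rewrite wswap_cat wswap_commphi; apply: gen_invcons => //; exists b, a.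
- by rewrite wswap_cat wswap_winv wswap_commphi winvK; apply: gen_cons => //; exists b, a.
Qed.

Section LambdaStep.
Variables (p : nat) (N M : {group gT}).
Hypothesis nM : [set: gT] \subset 'N(M).
Hypothesis sRNM : [~: N, [set: gT]] \subset M.
Hypothesis expNM : {in N, forall x, x ^+ p \in M}.
Hypothesis sNG_GN : forall w,
  in_nusub (comm_gens N [set: gT]) w -> in_nusub (comm_gens [set: gT] N) w.

Local Notation inGM := (in_nusub (comm_gens [set: gT] M)).
Local Notation inGN := (in_nusub (comm_gens [set: gT] N)).

Lemma inGM_wconj y w : inGM w -> inGM (wconj y w).
Proof. by apply: comm_gens_wconj; rewrite ?normT. Qed.

Lemma inGM_commphi a b : b \in M -> inGM (commphi a b).
Proof. by move=> Mb; apply: nusub_gen; exists a, b; rewrite inE. Qed.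

Lemma inGN_commphi a b : b \in N -> inGN (commphi a b).
Proof. by move=> Nb; apply: nusub_gen; exists a, b; rewrite inE. Qed.

Lemma inGN_commphil a b : a \in N -> inGN (commphi a b).
Proof. by move=> Na; apply/sNG_GN/nusub_gen; exists a, b; rewrite inE. Qed.

Lemma gcomm_memR a b : b \in N -> gcomm a b \in M.
Proof.
move=> Nb; have -> : gcomm a b = [~ b^-1, a^-1] ^-1.
  by rewrite invg_comm /commg /conjg !invgK !mulgA.
by rewrite groupV (subsetP sRNM) // mem_commg ?groupV ?inE.
Qed.

Definition eqmod u v := inGM (u ++ winv v).
Local Notation "u =m v" := (eqmod u v) (at level 70).

#[local] Instance eqmod_Equivalence : Equivalence eqmod.
Proof.
split.
- by move=> u; rewrite /eqmod catwV; exact: nusub_nil.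
- by move=> u v /nusub_winv; rewrite winv_cat winvK.
- by move=> u v w Huv Hvw; have := nusub_cat Huv Hvw; rewrite /eqmod -catA catKw.
Qed.

#[local] Hint Extern 0 (_ =m _) => reflexivity : core.

#[local] Instance cat_eqmod : Proper (eqmod ==> eqmod ==> eqmod) (@cat _).
Proof.
move=> u u' Hu v v' Hv; have := nusub_cat Hu (inGM_wconj u' Hv).
by rewrite /eqmod /wconj !winv_cat -!catA catKw.
Qed.

#[local] Instance winv_eqmod : Proper (eqmod ==> eqmod) (@winv gT).
Proof.
move=> u v Huv; have := inGM_wconj (winv u) (nusub_winv Huv).
by rewrite /eqmod /wconj !winv_cat !winvK -!catA catVw cats0.
Qed.

#[local] Instance nueq_eqmod : subrelation (@nueq gT) eqmod.
Proof. by move=> u v Huv; rewrite /eqmod Huv catwV; exact: nusub_nil. Qed.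

Lemma inGM_eqmod w : inGM w <-> w =m [::].
Proof. by rewrite /eqmod cats0. Qed.

#[local] Instance wconj_eqmod y : Proper (eqmod ==> eqmod) (wconj y).
Proof. by move=> u v Huv; rewrite /wconj Huv. Qed.

(* Conjugation moves a generator [a, b^phi] by the factor [g, [a, b]^phi],
   which lies in [G, M^phi]. *)
Lemma wconj_commphi_eqmod y a b : b \in N -> wconj y (commphi a b) =m commphi a b.
Proof.
move=> Nb; elim: y => [|l y IHy]; first by rewrite wconj0.
rewrite -cat1s wconjM IHy letter_emb.
case: l.1.1; rewrite ?(wconj_phi_inGG _ (inGG_commphi a b)).
all: by rewrite /eqmod -commphi_gcommr; exact/inGM_commphi/gcomm_memR.
Qed.

Lemma wconj_inGN_eqmod y z : inGN z -> wconj y z =m z.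
Proof.
elim/nusub_ind => [u v Huv|||s w Ss _ IH]; first by rewrite Huv.
- by rewrite wconj_nil.
- by move=> _ w [a [b [_ Nb ->]]] _ IH; rewrite wconj_cat IH wconj_commphi_eqmod.
- by case: Ss => [a [b [_ Nb ->]]]; rewrite wconj_cat IH wconj_winv wconj_commphi_eqmod.
Qed.

Lemma inGN_central y z : inGN z -> y ++ z =m z ++ y.
Proof.
move=> Nz; have -> : y ++ z =w wconj y z ++ y by rewrite /wconj -!catA catVw cats0.
by rewrite wconj_inGN_eqmod.
Qed.

Definition wpow w n : word gT := iter n (cat w) [::].

Lemma wpowSr w n : wpow w n.+1 = wpow w n ++ w.
Proof.
elim: n => [|n IHn]; first by rewrite /= cats0.
by rewrite -[wpow w n.+2]/(w ++ wpow w n.+1) {1}IHn catA.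
Qed.

Lemma wpow_winv u n : wpow (winv u) n = winv (wpow u n).
Proof.
elim: n => [|n IHn] //.
by rewrite -[wpow _ n.+1]/(winv u ++ wpow (winv u) n) IHn wpowSr winv_cat.
Qed.

#[local] Instance wpow_nueq : Proper (@nueq gT ==> eq ==> @nueq gT) wpow.
Proof. by move=> u v Huv _ n ->; elim: n => [|n IHn] //=; rewrite IHn Huv. Qed.

Lemma inGN_wpow z n : inGN z -> inGN (wpow z n).
Proof. by move=> Nz; elim: n => [|n IHn]; [exact: nusub_nil | exact: nusub_cat]. Qed.

Lemma wpow_cat_eqmod u v n : inGN u -> inGN v -> wpow (u ++ v) n =m wpow u n ++ wpow v n.
Proof.
move=> Nu Nv; elim: n => [|n IHn] //=; rewrite IHn -!catA (catA v).
by rewrite (inGN_central v (inGN_wpow n Nu)) -catA.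
Qed.

Lemma commphiXr_eqmod a b n : b \in N -> commphi a (b ^+ n) =m wpow (commphi a b) n.
Proof.
move=> Nb; elim: n => [|n IHn]; first by rewrite expg0 commphi1r.
by rewrite expgS commphiMr wconj_inGN_eqmod ?IHn //; exact/inGN_commphi/groupX.
Qed.

Lemma commphiXl_eqmod x h n : x \in N -> commphi (x ^+ n) h =m wpow (commphi x h) n.
Proof.
move=> Nx; elim: n => [|n IHn]; first by rewrite expg0 commphi1l.
by rewrite expgS commphiMl wconj_inGN_eqmod ?IHn ?wpowSr //; exact/inGN_commphil/groupX.
Qed.

(* p-th powers of elements of [G, N^phi] lie in [G, M^phi]: modulo
   [G, M^phi], [G, N^phi] is abelian and [a, b^phi]^p = [a, (b^p)^phi]. *)
Lemma inGN_wpow_p z : inGN z -> inGM (wpow z p).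
Proof.
move=> Nz; apply/inGM_eqmod.
elim/nusub_ind: Nz => [u v Huv|||s w Ss Nw IH]; first by rewrite Huv.
- by elim: p => [|n IHn] //=; rewrite cats0.
- move=> _ w [a [b [_ Nb ->]]] Nw IH; have Nab := inGN_commphi a Nb.
  rewrite wpow_cat_eqmod //.
  by rewrite IH -commphiXr_eqmod // cats0 -inGM_eqmod; exact/inGM_commphi/expNM.
- case: Ss => a [b [_ Nb ->]]; have Nab := inGN_commphi a Nb.
  rewrite wpow_cat_eqmod //; last exact: nusub_winv.
  rewrite IH wpow_winv -commphiXr_eqmod // cats0.
  by have /inGM_eqmod -> := inGM_commphi a (expNM Nb).
Qed.

Definition lcomm_inGM (x : gT) := forall h, inGM (commphi x h).

Lemma lcomm_inGM_gen (A : {set gT}) :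
  {in A, forall a, lcomm_inGM a} -> {in <<A>>, forall x, lcomm_inGM x}.
Proof.
move=> JA _ /gen_prodgP[n [c Ac ->]]; elim: n c Ac => [|n IHn] c Ac h.
  by rewrite big_ord0 commphi1l; exact: nusub_nil.
rewrite big_ord_recl commphiMl; apply: nusub_cat; last exact: JA.
by apply/inGM_wconj/IHn => i.
Qed.

Lemma lcomm_inGM_commg x g : x \in N -> lcomm_inGM [~ x, g].
Proof.
move=> Nx h; have -> : [~ x, g] = gcomm x^-1 g^-1.
  by rewrite /gcomm /commg /conjg !invgK !mulgA.
rewrite commphi_gcomml; apply/inGM_eqmod.
by rewrite wconj_inGN_eqmod ?catwV //; apply/inGN_commphil/groupVr.
Qed.

Lemma lcomm_inGM_expg x : x \in N -> lcomm_inGM (x ^+ p).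
Proof.
move=> Nx h; apply/inGM_eqmod; rewrite commphiXl_eqmod // -inGM_eqmod.
exact/inGN_wpow_p/inGN_commphil.
Qed.

Lemma comm_step_phi_sub w :
  M \subset <<[~: N, [set: gT]] :|: [set x ^+ p | x in N]>> ->
  in_nusub (comm_gens M [set: gT]) w -> inGM w.
Proof.
move=> sM; have lcommM : {in M, forall m, lcomm_inGM m}.
  move=> m /(subsetP sM); apply: lcomm_inGM_gen => a /setUP[].
    by apply: lcomm_inGM_gen => _ /imset2P[x g Nx _ ->]; exact: lcomm_inGM_commg.
  by case/imsetP=> x Nx ->; exact: lcomm_inGM_expg.
apply: (@nusub_ind _ inGM) => [||s w' Ss _ IH].
- exact: nusub_nil.
- by move=> _ w' [m [h [Mm _ ->]]] _ IH; apply: nusub_cat => //; exact: lcommM.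
- by case: Ss => m [h [Mm _ ->]]; apply: nusub_cat => //; apply/nusub_winv/lcommM.
Qed.

End LambdaStep.

End WordCalculus.

Lemma lambda_step_norm (gT : finGroupType) p (L : {set gT}) :
  [set: gT] \subset 'N(L) -> [set: gT] \subset 'N(lambda_step p L).
Proof.
move=> nL; apply: subset_trans (norm_gen _); apply: normsU; first exact: normsR.
apply/subsetP=> g _; rewrite inE; apply/subsetP=> _ /imsetP[_ /imsetP[x Lx ->] ->].
by rewrite conjXg; apply: imset_f; rewrite memJ_norm // (subsetP nL) ?inE.
Qed.

Lemma lambda_norm (gT : finGroupType) p k : [set: gT] \subset 'N(lambda_ gT p k).
Proof.
rewrite /lambda_; elim: k.-1 => [|n IHn]; first by rewrite normT.
by rewrite iterS; exact: lambda_step_norm.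
Qed.

Lemma lambda_group_set (gT : finGroupType) p k : group_set (lambda_ gT p k).
Proof. by rewrite /lambda_; case: k.-1 => [|n]; [exact: groupP | exact: group_set_generated]. Qed.

Lemma comm_lambda_phi_sub (gT : finGroupType) p k : 1 <= k -> forall w,
  in_nusub (comm_gens (lambda_ gT p k) [set: gT]) w ->
  in_nusub (comm_gens [set: gT] (lambda_ gT p k)) w.
Proof.
case: k => // k _; elim: k => [|k IHk] //.
pose L i := group (lambda_group_set gT p i).
have sRL : [~: L k.+1, [set: gT]] \subset L k.+2.
  by apply: subset_trans (subset_gen _); exact: subsetUl.
have expL : {in L k.+1, forall x, x ^+ p \in L k.+2}.
  by move=> x Lx; apply/mem_gen/setUP; right; exact: imset_f.
by move=> w; apply: (comm_step_phi_sub (lambda_norm gT p k.+2) sRL expL IHk).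
Qed.

Theorem lemma4p1 (gT : finGroupType) (p : nat) :
  prime p -> (p.-group [set: gT])%g ->
  forall k : nat, 1 <= k ->
  forall w : word gT,
    in_nusub (comm_gens (@lambda_ gT p k) [set: gT]) w <->
    in_nusub (comm_gens [set: gT] (@lambda_ gT p k)) w.
Proof.
move=> _ _ k k_gt0 w; split; first exact: comm_lambda_phi_sub.
by move/wswap_comm_gens/(comm_lambda_phi_sub k_gt0)/wswap_comm_gens; rewrite wswapK.
Qed.
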